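(* Let $(X(t),T(t))_{t\ge0}$ be the joint KMP–temperature process described in the context, with arbitrary initial condition $(X(0),T(0))\in\mathbb R_+^{\overline{\mathbb V}}\times\mathbb R_+^{\overline{\mathbb V}}$ satisfying $T_j(0)=T_j$ for all $j\in\partial\mathbb V$, and define $\zeta_i(t):=X_i(t)T_i(t)$ for $i\in\overline{\mathbb V}$. Then the marginal process $X(t)$ is a Markov process with generator $L^\zeta$ with boundary temperatures identically equal to $1$ (i.e. $T_j=1$ for all $j\in\partial\mathbb V$ in the definition of $L^\zeta$), and the process $\zeta(t)$ is a Markov process with generator $L^\zeta$ with boundary temperatures $T_{\partial\mathbb V}=(T_j)_{j\in\partial\mathbb V}$; that is, both are boundary driven KMP processes.
   Context: Graph: $(\overline{\mathbb V},\overline E)$ is a finite oriented graph; $\overline{\mathbb V}=\mathbb V\cup\partial\mathbb V$ (disjoint; internal and boundary vertices). There is at most one edge between any pair of vertices and if $ij\in\overline E$ then $ji\notin\overline E$. $E$ is the set of edges with both endpoints in $\mathbb V$, $\partial E$ the set of edges with one endpoint in $\partial\mathbb V$; there are no edges between two boundary vertices, and every boundary edge is written $ij$ with $i\in\mathbb V$, $j\in\partial\mathbb V$. $\overline E=E\cup\partial E$. Each $j\in\partial\mathbb V$ carries a fixed temperature $T_j>0$. KMP process with boundary temperatures $T_{\partial\mathbb V}$: Markov process on $\mathbb R_+^{\overline{\mathbb V}}$ with generator $L^\zeta f(\zeta)=\sum_{ij\in E}\int_0^1du\,[f(H^\zeta_{ij;u}\zeta)-f(\zeta)]+\sum_{ij\in\partial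 E}\int_0^1du\int_0^\infty db\,e^{-b}[f(H^\zeta_{ij;u,b}\zeta)-f(\zeta)]$, where $(H^\zeta_{ij;u}\zeta)_i=u(\zeta_i+\zeta_j)$, $(H^\zeta_{ij;u}\zeta)_j=(1-u)(\zeta_i+\zeta_j)$, $(H^\zeta_{ij;u,b}\zeta)_i=u(\zeta_i+\zeta_j)$, $(H^\zeta_{ij;u,b}\zeta)_j=bT_j$, and all other coordinates unchanged. Joint KMP–temperature process $(X,T)$ on $\mathbb R_+^{\overline{\mathbb V}}\times\mathbb R_+^{\overline{\mathbb V}}$: generator $L^{X,T}f(X,T)=\sum_{ij\in E}\int_0^1du\,[f(H_{i,j;u}(X,T))-f(X,T)]+\sum_{ij\in\partial E}\int_0^\infty db\,e^{-b}\int_0^1du\,[f(H_{i,j;b,u}(X,T))-f(X,T)]$, where, writing $\bar T:=\frac{X_i}{X_i+X_j}T_i+\frac{X_j}{X_i+X_j}T_j$: $H_{i,j;u}$ sets $(X_i,T_i)\to(u(X_i+X_j),\bar T)$, $(X_j,T_j)\to((1-u)(X_i+X_j),\bar T)$ and leaves other coordinates unchanged; $H_{i,j;b,u}$ (for $j\in\partial\mathbb V$) sets $(X_i,T_i)\to(u(X_i+X_j),\bar T)$, $(X_j,T_j)\to(b,T_j)$ and leaves other coordinates unchanged. In particular $T_j(t)=T_j$ for all $t$ and all $j\in\partial\mathbb V$. *)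

From HB Require Import structures.
From mathcomp Require Import all_boot all_order all_algebra.
From mathcomp Require Import all_classical all_reals all_analysis.
Set Implicit Arguments. Unset Strict Implicit. Unset Printing Implicit Defensive.
Import Order.TTheory GRing.Theory Num.Theory.
Import numFieldNormedType.Exports.
Local Open Scope classical_set_scope.
Local Open Scope ring_scope.

Section Defs.
Variable R : realType.

(* ---------- Graph ----------
   V : finite type of all vertices (= \overline{V}); bnd : boundary vertices;
   E : oriented edge relation on \overline{V}.  Standing assumptions:
   ij edge -> ji not an edge (this also excludes loops), and every edge ij has
   an internal tail i (so no boundary-boundary edges, and boundary edges are
   oriented internal -> boundary). *)
Definition kmp_graph (V : finType) (bnd : pred V) (E : rel V) : Prop :=
  (forall i j, E i j -> ~~ E j i) /\ (forall i j, E i j -> ~~ bnd i).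

Definition int01 (h : R -> R) : R :=
  \int[@lebesgue_measure R]_(u in [set u : R | 0 <= u <= 1]) h u.
Definition intpos (h : R -> R) : R :=
  \int[@lebesgue_measure R]_(b in [set b : R | 0 <= b]) h b.

Definition upd_bulk (V : finType) (z : V -> R) (i j : V) (u : R) : V -> R :=
  fun k => if k == i then u * (z i + z j)
           else if k == j then (1 - u) * (z i + z j) else z k.

Definition upd_bnd (V : finType) (Tb : V -> R) (z : V -> R) (i j : V) (u b : R)
  : V -> R :=
  fun k => if k == i then u * (z i + z j)
           else if k == j then b * Tb j else z k.

(* L^zeta with boundary temperatures Tb (only the values Tb j, j boundary, matter) *)
Definition LKMP (V : finType) (bnd : pred V) (E : rel V) (Tb : V -> R)
  (f : (V -> R) -> R) (z : V -> R) : R :=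
  \sum_(p : V * V | E p.1 p.2 && ~~ bnd p.2)
      int01 (fun u => f (upd_bulk z p.1 p.2 u) - f z)
  + \sum_(p : V * V | E p.1 p.2 && bnd p.2)
      int01 (fun u => intpos (fun b =>
        expR (- b) * (f (upd_bnd Tb z p.1 p.2 u b) - f z))).

Definition Tbar (V : finType) (x t : V -> R) (i j : V) : R :=
  x i / (x i + x j) * t i + x j / (x i + x j) * t j.

Definition updXT_bulk (V : finType) (s : (V -> R) * (V -> R)) (i j : V) (u : R)
  : (V -> R) * (V -> R) :=
  let x := s.1 in let t := s.2 in
  (fun k => if k == i then u * (x i + x j)
            else if k == j then (1 - u) * (x i + x j) else x k,
   fun k => if (k == i) || (k == j) then Tbar x t i j else t k).

Definition updXT_bnd (V : finType) (s : (V -> R) * (V -> R)) (i j : V) (b u : R)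
  : (V -> R) * (V -> R) :=
  let x := s.1 in let t := s.2 in
  (fun k => if k == i then u * (x i + x j)
            else if k == j then b else x k,
   fun k => if k == i then Tbar x t i j else t k).

Definition LXT (V : finType) (bnd : pred V) (E : rel V)
  (f : (V -> R) * (V -> R) -> R) (s : (V -> R) * (V -> R)) : R :=
  \sum_(p : V * V | E p.1 p.2 && ~~ bnd p.2)
      int01 (fun u => f (updXT_bulk s p.1 p.2 u) - f s)
  + \sum_(p : V * V | E p.1 p.2 && bnd p.2)
      intpos (fun b => expR (- b) *
        int01 (fun u => f (updXT_bnd s p.1 p.2 b u) - f s)).

Definition coord_sigma (I S : Type) (c : I -> S -> R) : set (set S) :=
  <<s \bigcup_(i in [set: I]) preimage_set_system [set: S] (c i) measurable >>.

Definition state_sigma (V : finType) : set (set (V -> R)) :=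
  coord_sigma (fun (k : V) (z : V -> R) => z k).

Definition joint_sigma (V : finType) : set (set ((V -> R) * (V -> R))) :=
  coord_sigma (fun (k : V + V) (s : (V -> R) * (V -> R)) =>
                 match k with inl k => s.1 k | inr k => s.2 k end).

Definition nonneg_state (V : finType) : set (V -> R) :=
  [set z | forall k, 0 <= z k].
Definition nonneg_joint (V : finType) : set ((V -> R) * (V -> R)) :=
  [set s | (forall k, 0 <= s.1 k) /\ (forall k, 0 <= s.2 k)].

Definition bmeas (S : Type) (MS : set (set S)) (f : S -> R) : Prop :=
  (exists M : R, forall x, `|f x| <= M) /\
  (forall B : set R, measurable B -> MS (f @^-1` B)).

(* ---------- Markov process with generator L ----------
   Y is a Markov process with state space Sspace (sigma-algebra MS) and
   generator L on the probability space (Omega, P), in the sense of the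
   (Stroock-Varadhan / Ethier-Kurtz) martingale problem w.r.t. the natural
   filtration of Y: each Y t is a random variable with values in Sspace, and
   for all bounded measurable f, all 0 <= s_1,...,s_n <= s <= t and all bounded
   measurable g_1,...,g_n,
     E[(f(Y t) - f(Y s)) prod_k g_k(Y s_k)]
        = int_s^t E[(L f)(Y r) prod_k g_k(Y s_k)] dr,
   i.e. f(Y t) - f(Y 0) - int_0^t (L f)(Y r) dr is a martingale. *)
Definition markov_gen d (Omega : measurableType d) (P : probability Omega R)
  (S : Type) (MS : set (set S)) (Sspace : set S)
  (L : (S -> R) -> S -> R) (Y : R -> Omega -> S) : Prop :=
  (forall t, 0 <= t -> forall A, MS A -> measurable (Y t @^-1` A)) /\
  (forall t w, 0 <= t -> Sspace (Y t w)) /\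
  (forall f, bmeas MS f ->
   forall (n : nat) (sk : 'I_n -> R) (g : 'I_n -> S -> R),
   (forall k, bmeas MS (g k)) ->
   forall s t, (forall k, 0 <= sk k <= s) -> 0 <= s -> s <= t ->
   \int[P]_w ((f (Y t w) - f (Y s w)) * \prod_(k < n) g k (Y (sk k) w))
   = \int[@lebesgue_measure R]_(r in [set r : R | s <= r <= t])
       (\int[P]_w (L f (Y r w) * \prod_(k < n) g k (Y (sk k) w)))).

End Defs.

From HB Require Import structures.
From mathcomp Require Import all_boot all_order all_algebra.
From mathcomp Require Import all_classical all_reals all_analysis.
From mathcomp Require Import measurable_realfun.
Set Implicit Arguments. Unset Strict Implicit. Unset Printing Implicit Defensive.
Import Order.TTheory GRing.Theory Num.Theory.
Local Open Scope classical_set_scope.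
Local Open Scope ring_scope.

(* The energies X never see the temperatures: every move of the joint generator acts on X as
   the corresponding KMP move with unit boundary temperatures.  The only difference is that at
   a boundary edge the joint generator integrates first over the reservoir energy b and then
   over the split u, the KMP generator in the other order; Fubini reconciles the two.
   For zeta = X T, the averaged temperature Tbar satisfies (X_i + X_j) Tbar = zeta_i + zeta_j,
   so a bulk move redistributes zeta_i + zeta_j uniformly and a boundary move sets
   zeta_j = b T_j(t).  No move changes a boundary temperature, so the generator kills the
   indicator of "some T_j(t) differs from T_j"; that event is absent at time 0, hence null at
   all times.  Off it, the joint generator applied to f \o zeta is the KMP generator with
   boundary temperatures T applied to f, and the martingale problem only integrates the
   generator against P, so the null set is harmless. *)

(* No measurability of the integrands is assumed: w |-> (L f)(Y r w) is not known to be
   measurable. *)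
Section integral_off_null.
Local Open Scope ereal_scope.
Import HBNNSimple.
Context d (T : measurableType d) (R : realType) (mu : {measure set T -> \bar R}).
Variable N : set T.
Hypotheses (mN : measurable N) (muN0 : mu N = 0).

Lemma ge0_le_integral_off_null (f g : T -> \bar R) :
  (forall x, 0 <= f x) -> (forall x, 0 <= g x) ->
  (forall x, ~ N x -> f x = g x) -> \int[mu]_x f x <= \int[mu]_x g x.
Proof.
move=> f0 g0 fg; rewrite !ge0_integralTE //.
apply: ge_ereal_sup => _ [h hf <-].
(* Restricted to ~` N, a simple function below f lies below g and keeps its integral. *)
pose h' := proj_nnsfun h (measurableC mN).
have h'E x : (h' x)%:E = if x \in N then 0 else (h x)%:E.
  by rewrite /h' /proj_nnsfun /= mindicE in_setC; case: (x \in N); rewrite ?mulr0 ?mulr1.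
have -> : sintegral mu h = sintegral mu h'.
  have mh (k : {nnsfun T >-> R}) : measurable_fun setT (EFin \o k).
    by apply/measurable_EFinP; exact: measurable_funTS.
  rewrite -!integralT_nnsfun.
  rewrite (ge0_negligible_integral (D := setT) mN) //;
    try by [exact: mh | move=> x _; rewrite lee_fin].
  rewrite [RHS](ge0_negligible_integral (D := setT) mN) //;
    try by [exact: mh | move=> x _; rewrite lee_fin].
  by apply: eq_integral => x /set_mem [_ nNx] /=; rewrite h'E memNset.
apply: ereal_sup_ubound; exists h' => // x.
rewrite h'E; case: (boolP (x \in N)) => [_|/negP nNx]; first exact: g0.
by rewrite -fg // => /mem_set.
Qed.

Lemma integral_eq_off_null (f g : T -> \bar R) :
  (forall x, ~ N x -> f x = g x) -> \int[mu]_x f x = \int[mu]_x g x.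
Proof.
move=> fg; rewrite integralE [RHS]integralE.
have ge0_eq (F G : T -> \bar R) : (forall x, 0 <= F x) -> (forall x, 0 <= G x) ->
    (forall x, ~ N x -> F x = G x) -> \int[mu]_x F x = \int[mu]_x G x.
  move=> F0 G0 FG; apply/le_anti/andP.
  by split; apply: ge0_le_integral_off_null => // x /FG.
by congr (_ - _); apply: ge0_eq => [x|x|x nNx];
  rewrite ?funepos_ge0 ?funeneg_ge0 ?funeposE ?funenegE ?fg.
Qed.

Lemma Rintegral_eq_off_null (f g : T -> R) :
  (forall x, ~ N x -> f x = g x) -> (\int[mu]_x f x = \int[mu]_x g x)%R.
Proof.
by move=> fg; congr fine; apply: integral_eq_off_null => x /fg ->.
Qed.

End integral_off_null.

Lemma Rintegral0_eq d (T : measurableType d) (R : realType)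
    (mu : {measure set T -> \bar R}) (D : set T) (g : T -> R) :
  (forall x, D x -> g x = 0) -> \int[mu]_(x in D) g x = 0.
Proof. by move=> g0; rewrite /Rintegral integral0_eq // => x /g0 ->. Qed.

Section Rintegral_swap.
Local Open Scope ereal_scope.
Context d1 d2 (T1 : measurableType d1) (T2 : measurableType d2) (R : realType).
Variables (m1 : {sigma_finite_measure set T1 -> \bar R})
          (m2 : {sigma_finite_measure set T2 -> \bar R}).
Variables (A : set T1) (B : set T2).
Hypotheses (mA : measurable A) (mB : measurable B).

Lemma integral_patch_setX1 (F : T1 -> T2 -> \bar R) u :
  \int[m2]_b ((fun p => F p.1 p.2) \_ (A `*` B)) (u, b)
  = ((fun u => \int[m2]_(b in B) F u b) \_ A) u.
Proof.
rewrite [RHS]patchE; case: ifPn => uA.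
  by rewrite [RHS]integral_mkcond; apply: eq_integral => b _; rewrite !patchE in_setX uA.
by apply: integral0_eq => b _; rewrite patchE in_setX (negbTE uA).
Qed.

Lemma integral_patch_setX2 (F : T1 -> T2 -> \bar R) b :
  \int[m1]_u ((fun p => F p.1 p.2) \_ (A `*` B)) (u, b)
  = ((fun b => \int[m1]_(u in A) F u b) \_ B) b.
Proof.
rewrite [RHS]patchE; case: ifPn => bB.
  by rewrite [RHS]integral_mkcond; apply: eq_integral => u _; rewrite !patchE in_setX bB andbT.
by apply: integral0_eq => u _; rewrite patchE in_setX (negbTE bB) andbF.
Qed.

Variables (k : T1 -> T2 -> R) (h : T2 -> R).
Hypotheses (mk : measurable_fun setT (fun p : T1 * T2 => k p.1 p.2))
  (mA_fin : m1 A < +oo) (ih : m2.-integrable B (EFin \o h))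
  (kh : forall u b, (`|k u b| <= h b)%R).

Let mk1 u : measurable_fun setT (k u).
Proof. exact: measurableT_comp mk (pair1_measurable u). Qed.

Let mk2 b : measurable_fun setT (k^~ b).
Proof. exact: measurableT_comp mk (pair2_measurable b). Qed.

Let integrable_section1 u : m2.-integrable B (fun b => (k u b)%:E).
Proof.
apply: (le_integrable mB _ _ ih) => [|b _]; first exact/measurable_EFinP/measurable_funTS.
by rewrite !abse_EFin lee_fin (le_trans (kh u b)) ?ler_norm.
Qed.

Let integrable_section2 b : m1.-integrable A (fun u => (k u b)%:E).
Proof.
have icst : m1.-integrable A (cst (h b)%:E).
  apply/integrableP; split; first exact: measurable_cst.
  by rewrite integral_cst // lte_mul_pinfty.
apply: (le_integrable mA _ _ icst) => [|u _]; first exact/measurable_EFinP/measurable_funTS.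
by rewrite !abse_EFin lee_fin (le_trans (kh u b)) ?ler_norm.
Qed.

Let H := (fun p : T1 * T2 => (k p.1 p.2)%:E) \_ (A `*` B).

Let integrable_H : (m1 \x m2).-integrable setT H.
Proof.
have mH : measurable_fun setT H.
  apply/(measurable_restrict _ (measurableX mA mB) measurableT).
  exact/measurable_funTS/measurable_EFinP.
apply/(integrable12ltyP _ _ mH).
have absH p : `|H p| = ((fun p : T1 * T2 => `|(k p.1 p.2)%:E|) \_ (A `*` B)) p.
  by rewrite /H !patchE; case: ifPn => //; rewrite abse0.
pose F u := \int[m2]_(b in B) `|(k u b)%:E|.
have FA u : \int[m2]_b `|H (u, b)| = (F \_ A) u.
  by rewrite -integral_patch_setX1; apply: eq_integral => b _; rewrite absH.
have mFA : measurable_fun setT (F \_ A).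
  have mF := measurable_fun_fubini_tonelli_F (m2 := m2) (abse \o H)
    (measurableT_comp (@abse_measurable _ setT) mH) (fun _ => abse_ge0 _).
  have eF : {in setT, fubini_F m2 (abse \o H) =1 F \_ A} by move=> u _; exact: FA.
  exact: eq_measurable_fun eF mF.
under eq_integral do rewrite FA.
pose C := \int[m2]_(b in B) (h b)%:E.
have h0 b : (0 <= h b)%R by rewrite (le_trans _ (kh (point : T1) b)).
apply: (@le_lt_trans _ _ (\int[m1]_u ((cst C) \_ A) u)).
  apply: ge0_le_integral => //.
  - by move=> u _; rewrite patchE; case: ifPn => // _; exact: integral_ge0.
  - exact/(measurable_restrict _ mA measurableT)/measurable_cst.
  - move=> u _; rewrite !patchE; case: ifPn => // _.
    apply: ge0_le_integral => //.
    + apply: measurableT_comp => //; apply/measurable_EFinP.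
      exact: measurable_funTS (mk1 u).
    + exact: measurable_int ih.
    + by move=> b _; rewrite abse_EFin lee_fin kh.
rewrite -integral_mkcond integral_cst // lte_mul_pinfty //.
  by apply: integral_ge0 => b _; rewrite lee_fin.
exact: integrable_fin_num ih.
Qed.

Lemma Rintegral_swap :
  (\int[m1]_(u in A) \int[m2]_(b in B) k u b
   = \int[m2]_(b in B) \int[m1]_(u in A) k u b)%R.
Proof.
rewrite /Rintegral; congr fine.
transitivity (\int[m1]_(u in A) \int[m2]_(b in B) (k u b)%:E).
  by apply: eq_integral => u _; rewrite fineK // integrable_fin_num.
transitivity (\int[m2]_(b in B) \int[m1]_(u in A) (k u b)%:E); last first.
  by apply: eq_integral => b _; rewrite fineK // integrable_fin_num.
rewrite integral_mkcond [RHS]integral_mkcond.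
under eq_integral do rewrite -(integral_patch_setX1 (fun u b => (k u b)%:E)).
under [RHS]eq_integral do rewrite -(integral_patch_setX2 (fun u b => (k u b)%:E)).
exact: (Fubini integrable_H).
Qed.

End Rintegral_swap.

Section unit_interval_halfline.
Variable R : realType.
Notation mu := (@lebesgue_measure R).
Notation RL := (measurableTypeR R).

Let unit_itvE : [set u : RL | 0 <= u <= 1] = `[0, 1]%classic.
Proof. by apply/seteqP; split => u; rewrite /= in_itv. Qed.

Let halflineE : [set b : RL | 0 <= b] = `[0, +oo[%classic.
Proof. by apply/seteqP; split => b; rewrite /= in_itv /= andbT. Qed.

Let measurable_unit_itv : measurable [set u : RL | 0 <= u <= 1].
Proof. by rewrite unit_itvE; exact: measurable_itv. Qed.

Let measurable_halfline : measurable [set b : RL | 0 <= b].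
Proof. by rewrite halflineE; exact: measurable_itv. Qed.

Let lebesgue_unit_itv_lty : (mu [set u : RL | (0 <= u <= 1)%R] < +oo)%E.
Proof. by rewrite unit_itvE lebesgue_measure_itv /= lte_fin ltr01 -EFinD ltry. Qed.

Let integrable_expRN :
  mu.-integrable [set b : RL | 0 <= b] (fun b => (expR (- b))%:E).
Proof.
apply: (@eq_integrable _ _ _ mu _ measurable_halfline (EFin \o exponential_pdf 1)).
  by move=> b /set_mem /= b0; rewrite exponential_pdfE // mul1r mulN1r.
by apply: integrableS (integrable_exponential_pdf ltr01).
Qed.

Lemma int01Zl (g : R -> R) (M c : R) : measurable_fun [set: RL] g ->
  (forall u, `|g u| <= M) -> int01 (fun u => c * g u) = c * int01 g.
Proof.
move=> mg gM; apply: RintegralZl => //.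
have icst : mu.-integrable [set u : RL | 0 <= u <= 1] (cst M%:E).
  apply/integrableP; split; first exact: measurable_cst.
  by rewrite integral_cst // lte_mul_pinfty.
apply: (le_integrable measurable_unit_itv _ _ icst) => [|u _].
  exact/measurable_EFinP/measurable_funTS.
by rewrite !abse_EFin lee_fin (le_trans (gM u)) ?ler_norm.
Qed.

Lemma int01_intpos_swap (k : R -> R -> R) (M : R) :
  measurable_fun [set: RL * RL] (fun p => k p.1 p.2) ->
  (forall u b, `|k u b| <= M * expR (- b)) ->
  int01 (fun u => intpos (k u)) = intpos (fun b => int01 (fun u => k u b)).
Proof.
move=> mk kM.
have ih : mu.-integrable [set b : RL | 0 <= b] (EFin \o (fun b => M * expR (- b))).
  exact: integrableZl integrable_expRN.
exact: (Rintegral_swap measurable_unit_itv measurable_halfline mk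
  lebesgue_unit_itv_lty ih kM).
Qed.

End unit_interval_halfline.

Section coordinate_sigma_algebras.
Variable R : realType.

Lemma coord_sigma_preimage d (aT : measurableType d) (I S : Type)
    (c : I -> S -> R) (phi : aT -> S) :
  (forall i, measurable_fun [set: aT] (c i \o phi)) ->
  forall A, coord_sigma c A -> measurable (phi @^-1` A).
Proof.
move=> mc A cA.
suff : image_set_system setT phi measurable A by rewrite /image_set_system /= setTI.
have sI : sigma_algebra setT (image_set_system setT phi measurable).
  exact: sigma_algebra_image (@sigma_algebra_measurable _ aT).
apply: (smallest_sub sI _ cA) => _ [i _ [B mB <-]]; rewrite /image_set_system /= !setTI.
by have := mc i measurableT B mB; rewrite setTI.
Qed.

Lemma bmeas_comp (S S' : Type) (MS : set (set S)) (MS' : set (set S'))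
    (phi : S -> S') (f : S' -> R) :
  (forall A, MS' A -> MS (phi @^-1` A)) -> bmeas MS' f -> bmeas MS (f \o phi).
Proof.
by move=> hphi [[M fM] mf]; split; [exists M => x; exact: fM | move=> B /mf /hphi].
Qed.

Lemma measurable_bmeas_comp (V : finType) d (aT : measurableType d)
    (phi : aT -> V -> R) (f : (V -> R) -> R) :
  (forall k, measurable_fun [set: aT] (fun a => phi a k)) ->
  bmeas (@state_sigma R V) f -> measurable_fun [set: aT] (f \o phi).
Proof.
move=> mphi [_ mf] _ B mB; rewrite setTI.
exact: (coord_sigma_preimage (c := fun k z => z k) mphi (mf B mB)).
Qed.

End coordinate_sigma_algebras.

(* joint_sigma is the sigma-algebra of the measurable type joint_space, which makes the
   library's closure properties of measurable functions available on the joint state space. *)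
Definition joint_state (R : realType) (V : finType) := ((V -> R) * (V -> R))%type.
HB.instance Definition _ R V := gen_eqMixin (joint_state R V).
HB.instance Definition _ R V := gen_choiceMixin (joint_state R V).
HB.instance Definition _ (R : realType) V :=
  isPointed.Build (joint_state R V) (fun _ => 0, fun _ => 0).

Section joint_space.
Variables (R : realType) (V : finType).

Definition joint_coord (k : V + V) (s : joint_state R V) : R :=
  match k with inl k => s.1 k | inr k => s.2 k end.

Definition joint_space := g_sigma_algebraType
  (\bigcup_(k in [set: V + V])
    preimage_set_system [set: joint_state R V] (joint_coord k) measurable).

Lemma measurable_joint_coord k : measurable_fun [set: joint_space] (joint_coord k).
Proof. by move=> _ B mB; apply: sub_sigma_algebra; exists k => //; exists B. Qed.

Lemma bmeas_joint (F : joint_space -> R) M :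
  measurable_fun setT F -> (forall s, `|F s| <= M) -> bmeas (@joint_sigma R V) F.
Proof.
move=> mF FM; split; first by exists M.
by move=> B mB; have := mF measurableT B mB; rewrite setTI.
Qed.

Lemma joint_sigma_preimage (phi : (V -> R) * (V -> R) -> V -> R) :
  (forall k, measurable_fun [set: joint_space] (fun s => phi s k)) ->
  forall A, state_sigma A -> joint_sigma (phi @^-1` A).
Proof. exact: (coord_sigma_preimage (aT := joint_space) (c := fun k z => z k)). Qed.

End joint_space.

Section generators.
Variables (R : realType) (V : finType) (bnd : pred V) (E : rel V).
Notation RL := (measurableTypeR R).

Lemma measurable_upd_bnd (Tb z : V -> R) i j (f : (V -> R) -> R) :
  bmeas (@state_sigma R V) f ->
  measurable_fun [set: RL * RL] (fun p => f (upd_bnd Tb z i j p.1 p.2)).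
Proof.
apply: (measurable_bmeas_comp (phi := fun p : RL * RL => upd_bnd Tb z i j p.1 p.2)).
move=> k; rewrite /upd_bnd.
case: (k == i); first by apply: measurable_funM => //; exact: measurable_fst.
case: (k == j); first by apply: measurable_funM => //; exact: measurable_snd.
exact: measurable_cst.
Qed.

Lemma boundary_term_swap (Tb z : V -> R) i j (f : (V -> R) -> R) :
  bmeas (@state_sigma R V) f ->
  intpos (fun b => expR (- b) * int01 (fun u => f (upd_bnd Tb z i j u b) - f z))
  = int01 (fun u => intpos (fun b => expR (- b) * (f (upd_bnd Tb z i j u b) - f z))).
Proof.
move=> bf; have [[M fM] _] := bf.
pose diff u b := f (upd_bnd Tb z i j u b) - f z.
have mdiff : measurable_fun [set: RL * RL] (fun p => diff p.1 p.2).
  exact: measurable_funB (measurable_upd_bnd _ _ _ _ bf) (measurable_cst _).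
have diffM u b : `|diff u b| <= M + M.
  by rewrite (le_trans (ler_normB _ _)) // lerD.
rewrite (int01_intpos_swap (M := M + M)); last 2 first.
- apply: measurable_funM mdiff; apply: measurableT_comp; first exact: measurable_expR.
  by apply: measurableT_comp; [exact: oppr_measurable | exact: measurable_snd].
- move=> u b; rewrite normrM ger0_norm ?expR_ge0 // mulrC.
  by apply: ler_wpM2r; [exact: expR_ge0 | exact: diffM].
rewrite /intpos; apply: eq_Rintegral => b _.
rewrite (int01Zl (M := M + M)) // => [|u]; last exact: diffM.
have -> : (fun u => diff u b) = (fun p : RL * RL => diff p.1 p.2) \o pair^~ b by [].
by apply: measurableT_comp => //; exact: pair2_measurable.
Qed.

Lemma LXT_LKMP_intertwine (Tb : V -> R) (F : (V -> R) * (V -> R) -> R)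
    (f : (V -> R) -> R) s z :
  bmeas (@state_sigma R V) f -> F s = f z ->
  (forall i j u, E i j -> ~~ bnd j -> F (updXT_bulk s i j u) = f (upd_bulk z i j u)) ->
  (forall i j b u, E i j -> bnd j -> F (updXT_bnd s i j b u) = f (upd_bnd Tb z i j u b)) ->
  LXT bnd E F s = LKMP bnd E Tb f z.
Proof.
move=> bf Fs bulk boundary; rewrite /LXT /LKMP Fs; congr (_ + _).
  apply: eq_bigr => p /andP[Ep bp]; congr int01; apply/funext => u.
  by rewrite bulk.
apply: eq_bigr => p /andP[Ep bp]; rewrite -boundary_term_swap //.
congr intpos; apply/funext => b; congr (_ * _); congr int01; apply/funext => u.
by rewrite boundary.
Qed.

Lemma LXT_comp_fst f s : bmeas (@state_sigma R V) f ->
  LXT bnd E (f \o fst) s = LKMP bnd E (fun _ => 1) f s.1.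
Proof.
move=> bf; apply: LXT_LKMP_intertwine => // i j b u _ _ /=.
by congr f; apply/funext => k; rewrite /updXT_bnd /upd_bnd /= mulr1.
Qed.

Definition zeta (s : (V -> R) * (V -> R)) : V -> R := fun i => s.1 i * s.2 i.

Lemma Tbar_conservation (x t : V -> R) i j : 0 <= x i -> 0 <= x j ->
  (x i + x j) * Tbar x t i j = x i * t i + x j * t j.
Proof.
move=> xi0 xj0; have [xij0|xij0] := eqVneq (x i + x j) 0.
  have /andP[/eqP xi /eqP xj] : (x i == 0) && (x j == 0).
    by rewrite -paddr_eq0 ?xij0.
  by rewrite xij0 mul0r xi xj !mul0r addr0.
by rewrite /Tbar mulrDr; congr (_ + _); rewrite mulrA mulrCA mulfV // mulr1.
Qed.

Lemma zeta_updXT_bulk s i j u : i != j -> 0 <= s.1 i -> 0 <= s.1 j ->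
  zeta (updXT_bulk s i j u) = upd_bulk (zeta s) i j u.
Proof.
move=> ij xi0 xj0; apply/funext => k.
have cons := Tbar_conservation s.2 xi0 xj0.
rewrite /zeta /updXT_bulk /upd_bulk /=.
case: eqP => [->|_]; first by rewrite -mulrA cons.
by case: eqP => [->|_] /=; first by rewrite -mulrA cons.
Qed.

Lemma zeta_updXT_bnd (Tb : V -> R) s i j b u : i != j -> 0 <= s.1 i -> 0 <= s.1 j ->
  s.2 j = Tb j -> zeta (updXT_bnd s i j b u) = upd_bnd Tb (zeta s) i j u b.
Proof.
move=> ij xi0 xj0 tj; apply/funext => k.
have cons := Tbar_conservation s.2 xi0 xj0.
rewrite /zeta /updXT_bnd /upd_bnd /=.
case: eqP => [_|_]; first by rewrite -mulrA cons.
by case: eqP => [->|_]; first by rewrite tj.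
Qed.

Lemma LXT_comp_zeta (Tb : V -> R) f s : kmp_graph bnd E ->
  bmeas (@state_sigma R V) f -> (forall k, 0 <= s.1 k) ->
  (forall j, bnd j -> s.2 j = Tb j) ->
  LXT bnd E (f \o zeta) s = LKMP bnd E Tb f (zeta s).
Proof.
move=> [asym _] bf x0 tbnd.
have neq i j : E i j -> i != j.
  by move=> Eij; apply: contraTneq Eij => <-; apply/negP => Eii; move/negP: (asym _ _ Eii).
apply: LXT_LKMP_intertwine => // [i j u Eij _ | i j b u Eij bj] /=.
  by rewrite zeta_updXT_bulk ?neq.
by rewrite (zeta_updXT_bnd (Tb := Tb)) ?neq ?tbnd.
Qed.

End generators.

Section martingale_problem.
Context d (Omega : measurableType d) (R : realType) (P : probability Omega R).
Variables (S : Type) (MS : set (set S)) (Sspace : set S).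
Variables (L : (S -> R) -> S -> R) (Y : R -> Omega -> S).
Hypothesis hY : markov_gen P MS Sspace L Y.

Lemma markov_gen_harmonic F : bmeas MS F -> (forall s, L F s = 0) ->
  forall t, 0 <= t -> \int[P]_w (F (Y t w) - F (Y 0 w)) = 0.
Proof.
move=> bF LF0 t t0; have [_ [_ mart]] := hY.
have := mart F bF 0 (fun=> 0) (fun _ _ => 0) ltac:(by case) 0 t ltac:(by case) (lexx 0) t0.
under eq_Rintegral do rewrite big_ord0 mulr1.
move=> ->; apply: Rintegral0_eq => r _.
by apply: Rintegral0_eq => w _; rewrite LF0 mul0r.
Qed.

Lemma markov_gen_map (S' : Type) (MS' : set (set S')) (Sspace' : set S')
    (L' : (S' -> R) -> S' -> R) (phi : S -> S') (Bad : set S) :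
  (forall A, MS' A -> MS (phi @^-1` A)) ->
  (forall s, Sspace s -> Sspace' (phi s)) ->
  MS Bad -> (forall t, 0 <= t -> P (Y t @^-1` Bad) = 0%E) ->
  (forall f, bmeas MS' f -> forall s, Sspace s -> ~ Bad s ->
     L (f \o phi) s = L' f (phi s)) ->
  markov_gen P MS' Sspace' L' (fun t w => phi (Y t w)).
Proof.
move=> hphi hsp mBad nullBad hL; have [mY [sY mart]] := hY.
split; first by move=> t t0 A /hphi /(mY t t0).
split; first by move=> t w t0; exact/hsp/sY.
move=> f bf n sk g bg s t hsk s0 st.
rewrite (mart _ (bmeas_comp hphi bf) n sk _ (fun k => bmeas_comp hphi (bg k)) s t hsk s0 st).
apply: eq_Rintegral => r /set_mem /= /andP[sr _]; have r0 := le_trans s0 sr.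
apply: (Rintegral_eq_off_null (mY r r0 _ mBad) (nullBad r r0)) => w nBw.
by rewrite hL //; exact: sY.
Qed.

End martingale_problem.

Section boundary_temperatures.
Variables (R : realType) (V : finType) (bnd : pred V) (E : rel V) (Tb : V -> R).

Definition bnd_temp_mismatch : set ((V -> R) * (V -> R)) :=
  [set s | exists2 j, bnd j & s.2 j != Tb j].

Lemma joint_sigma_bnd_temp_mismatch : @joint_sigma R V bnd_temp_mismatch.
Proof.
change (measurable (bnd_temp_mismatch : set (joint_space R V))).
have -> : bnd_temp_mismatch = \bigcup_(j in [set j | bnd j])
    (joint_coord (inr j) @^-1` [set~ Tb j] : set (joint_space R V)).
  by apply/seteqP; split => s [j bj /eqP tj]; exists j => //; exact/eqP.
apply: fin_bigcup_measurable; first exact: finite_finset.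
move=> j _; have := measurable_joint_coord (inr j) measurableT
  (measurableC (measurable_set1 (Tb j))).
by rewrite setTI.
Qed.

Lemma LXT_bnd_temp_fun_eq0 (F : (V -> R) * (V -> R) -> R) s :
  kmp_graph bnd E ->
  (forall s s', (forall j, bnd j -> s.2 j = s'.2 j) -> F s = F s') ->
  LXT bnd E F s = 0.
Proof.
move=> [_ tail_int] hF; rewrite /LXT.
rewrite !big1 ?addr0 // => p /andP[Ep bp].
  apply: Rintegral0_eq => b _; rewrite /int01 Rintegral0_eq ?mulr0 // => u _.
  rewrite (hF _ s) ?subrr // => j bj /=.
  by have /negbTE -> : j != p.1 by apply: contraNneq (tail_int _ _ Ep) => <-.
apply: Rintegral0_eq => u _; rewrite (hF _ s) ?subrr // => j bj /=.
have /negbTE -> : j != p.1 by apply: contraNneq (tail_int _ _ Ep) => <-.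
by have /negbTE -> : j != p.2 by apply: contraNneq bp => <-.
Qed.

Lemma boundary_temperatures_frozen d (Omega : measurableType d)
    (P : probability Omega R) (Y : R -> Omega -> (V -> R) * (V -> R)) :
  kmp_graph bnd E ->
  markov_gen P (@joint_sigma R V) (@nonneg_joint R V) (LXT bnd E) Y ->
  (forall w, ~ bnd_temp_mismatch (Y 0 w)) ->
  forall t, 0 <= t -> P (Y t @^-1` bnd_temp_mismatch) = 0%E.
Proof.
move=> hG hY Y0 t t0; have [mY _] := hY.
pose F : (V -> R) * (V -> R) -> R := \1_bnd_temp_mismatch.
have bF : bmeas (@joint_sigma R V) F.
  apply: (bmeas_joint (M := 1)).
    exact: (@measurable_indic _ (joint_space R V) R setT _ joint_sigma_bnd_temp_mismatch).
  by move=> s; rewrite /F indicE; case: (_ \in _); rewrite ?normr1 ?normr0.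
have LF0 s : LXT bnd E F s = 0.
  apply: LXT_bnd_temp_fun_eq0 => // s1 s2 s12; rewrite /F !indicE.
  suff -> : (s1 \in bnd_temp_mismatch) = (s2 \in bnd_temp_mismatch) by [].
  by apply/idP/idP => /set_mem [j bj tj]; apply/mem_set; exists j => //; move: tj; rewrite s12.
have mB := mY t t0 _ joint_sigma_bnd_temp_mismatch.
have := markov_gen_harmonic hY bF LF0 t0.
under eq_Rintegral do rewrite [X in _ - X]/F indicE memNset // subr0.
rewrite /Rintegral (eq_integral (fun w => (\1_(Y t @^-1` bnd_temp_mismatch) w)%:E)) //.
rewrite integral_indic // setIT => /eqP; rewrite fine_eq0 ?fin_num_measure //.
exact: eqP.
Qed.

End boundary_temperatures.

Unset Implicit Arguments.

Theorem proposition2p2 (R : realType) (V : finType) (bnd : pred V) (E : rel V)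
  (Tb : V -> R)
  (hG : kmp_graph bnd E) (hTb : forall j, bnd j -> 0 < Tb j)
  (d : measure_display) (Omega : measurableType d) (P : probability Omega R)
  (Y : R -> Omega -> (V -> R) * (V -> R)) (x0 t0 : V -> R)
  (hx0 : forall i, 0 <= x0 i) (ht0 : forall i, 0 <= t0 i)
  (ht0b : forall j, bnd j -> t0 j = Tb j)
  (hY0 : forall w, Y 0 w = (x0, t0))
  (hY : markov_gen P (@joint_sigma R V) (@nonneg_joint R V) (LXT bnd E) Y) :
  markov_gen P (@state_sigma R V) (@nonneg_state R V)
    (LKMP bnd E (fun _ => 1)) (fun t w => (Y t w).1)
  /\
  markov_gen P (@state_sigma R V) (@nonneg_state R V)
    (LKMP bnd E Tb) (fun t w => fun i => (Y t w).1 i * (Y t w).2 i).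
Proof.
have joint_sigma0 : @joint_sigma R V set0 by exact: sigma_algebra0.
split.
  apply: (markov_gen_map hY (Bad := set0)) => //.
  - exact: joint_sigma_preimage (fun k => measurable_joint_coord (inl k)).
  - by move=> s [].
  - by move=> t _; rewrite preimage_set0 measure0.
  - by move=> f bf s _ _; exact: LXT_comp_fst.
change (markov_gen P (@state_sigma R V) (@nonneg_state R V)
  (LKMP bnd E Tb) (fun t w => zeta (Y t w))).
apply: (markov_gen_map hY (Bad := bnd_temp_mismatch bnd Tb)).
- apply: joint_sigma_preimage => k.
  exact: measurable_funM (measurable_joint_coord (inl k)) (measurable_joint_coord (inr k)).
- by move=> s [xs ts] k; exact: mulr_ge0.
- exact: joint_sigma_bnd_temp_mismatch.
- apply: boundary_temperatures_frozen hG hY _ => w [j bj].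
  by rewrite hY0 /= ht0b ?eqxx.
- move=> f bf s [xs _] nB; apply: LXT_comp_zeta => // j bj.
  by apply/eqP/negPn/negP => tj; apply: nB; exists j.
Qed.
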